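(* Let $m,n$ be positive integers, let $r_b>0$ and $r_w>0$ be real numbers, and let $R_{th0}>0$ be a real number with $R_{th0}> m r_b + n r_w$. Define the sequence $(R^{(l)}_{th})_{l\ge 0}$ by $R^{(0)}_{th}=R_{th0}$ and, for $l\ge 1$, \[ \ln\big(R^{(l)}_{th}\big) = \ln(R_{th0}) - \frac{1}{mn}\sum_{i=1}^{m}\sum_{j=1}^{n}\ln\!\left(1-\frac{i r_b + j r_w}{R^{(l-1)}_{th}}\right). \] Then the sequence $(R^{(l)}_{th})_{l\ge0}$ converges, and its limit $R_{th\_array}$ is a solution of the equation \[ \ln(R_{th0})=\frac{1}{mn}\sum_{i=1}^{m}\sum_{j=1}^{n}\ln\big(R_{th\_array}-i r_b-j r_w\big). \]
   Context: This iteration is the paper's ''STMC threshold solver algorithm'' for computing a single read resistance threshold for an $m\times n$ crossbar memory array with wordline interconnect resistance $r_w$ and bitline interconnect resistance $r_b$ per cell; $R_{th0}$ is the optimal read resistance threshold when line resistance is ignored. (The paper's algorithm also stops after a fixed number of iterations or when successive iterates differ by at most a tolerance $\epsilon$; the lemma concerns the limit of the unstopped iteration.) *)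

From Stdlib Require Import Reals.
From Coquelicot Require Import Coquelicot.
Open Scope R_scope.

Definition avg_grid (m n : nat) (f : nat -> nat -> R) : R :=
  / (INR m * INR n) *
  sum_n_m (fun i => sum_n_m (fun j => f i j) 1 n) 1 m.

Definition stmc_step (m n : nat) (rb rw Rth0 Rold : R) : R :=
  exp (ln Rth0 - avg_grid m n
         (fun i j => ln (1 - (INR i * rb + INR j * rw) / Rold))).

Fixpoint stmc_seq (m n : nat) (rb rw Rth0 : R) (l : nat) : R :=
  match l with
  | O => Rth0
  | S l' => stmc_step m n rb rw Rth0 (stmc_seq m n rb rw Rth0 l')
  end.

From Stdlib Require Import Reals Lra Lia Psatz.
From Coquelicot Require Import Coquelicot.
Open Scope R_scope.

(* Let T be the STMC step and C = m rb + n rw. On (C, +oo) the map T is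
   decreasing and bounded below by Rth0, so the even iterates increase, the odd
   ones decrease, and their limits are exchanged by T.  Everything rests on T
   having no 2-cycle P < Q.  Averaging the cycle equations over the grid gives
   P Q <= C (P + Q), i.e. x + y >= 1 for x = C/Q < y = C/P; the concavity of
   u |-> u^t gives ln (1 - x) (alpha + ln x) <= ln (1 - y) (alpha + ln y) with
   alpha = ln (Rth0 / C) > 0; and ln y ln (1 - y) <= ln x ln (1 - x) whenever
   x + y >= 1.  Together these contradict ln (1 - y) < ln (1 - x).  So both
   limits coincide with a fixed point of T, which is the stated equation. *)

Lemma sum_n_m_le_loc (u v : nat -> R) (p q : nat) :
  (forall k, (p <= k <= q)%nat -> u k <= v k) -> sum_n_m u p q <= sum_n_m v p q.
Proof.
  intros Huv.
  rewrite (sum_n_m_ext_loc v (fun k => Rmax (u k) (v k))).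
  - apply sum_n_m_le; intros; apply Rmax_l.
  - intros k Hk; rewrite Rmax_right; auto.
Qed.

Lemma continuity_pt_sum_n_m (f : nat -> R -> R) (p q : nat) (x : R) :
  (forall k, (p <= k <= q)%nat -> continuity_pt (f k) x) ->
  continuity_pt (fun y => sum_n_m (fun k => f k y) p q) x.
Proof.
  induction q as [|q IHq]; intros Hf.
  - destruct p as [|p].
    + apply (continuity_pt_ext (f 0%nat)); [intros y; now rewrite sum_n_n|].
      apply Hf; lia.
    + apply (continuity_pt_ext (fun _ => 0)); [intros y; now rewrite sum_n_m_zero by lia|].
      apply continuity_pt_const; intros ??; reflexivity.
  - destruct (Nat.le_gt_cases p (S q)) as [Hpq|Hqp].
    + apply (continuity_pt_ext (fun y => sum_n_m (fun k => f k y) p q + f (S q) y)).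
      { intros y; now rewrite sum_n_Sm. }
      apply continuity_pt_plus; [apply IHq; intros k Hk|]; apply Hf; lia.
    + apply (continuity_pt_ext (fun _ => 0)); [intros y; now rewrite sum_n_m_zero by lia|].
      apply continuity_pt_const; intros ??; reflexivity.
Qed.

Section GridAverage.

Variables m n : nat.
Hypotheses (m_pos : (0 < m)%nat) (n_pos : (0 < n)%nat).

Lemma avg_grid_ext (f g : nat -> nat -> R) :
  (forall i j, (1 <= i <= m)%nat -> (1 <= j <= n)%nat -> f i j = g i j) ->
  avg_grid m n f = avg_grid m n g.
Proof.
  intros Hfg; unfold avg_grid; f_equal.
  apply sum_n_m_ext_loc; intros i Hi; apply sum_n_m_ext_loc; intros j Hj; auto.
Qed.

Lemma avg_grid_le (f g : nat -> nat -> R) :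
  (forall i j, (1 <= i <= m)%nat -> (1 <= j <= n)%nat -> f i j <= g i j) ->
  avg_grid m n f <= avg_grid m n g.
Proof.
  intros Hfg; unfold avg_grid; apply Rmult_le_compat_l.
  - apply Rlt_le, Rinv_0_lt_compat, Rmult_lt_0_compat; apply lt_0_INR; lia.
  - apply sum_n_m_le_loc; intros i Hi; apply sum_n_m_le_loc; intros j Hj; auto.
Qed.

Lemma avg_grid_plus (f g : nat -> nat -> R) :
  avg_grid m n (fun i j => f i j + g i j) = avg_grid m n f + avg_grid m n g.
Proof.
  unfold avg_grid; rewrite <- Rmult_plus_distr_l; f_equal.
  rewrite <- (sum_n_m_plus (G := R_AbelianMonoid)); apply sum_n_m_ext; intros i.
  apply (sum_n_m_plus (G := R_AbelianMonoid)).
Qed.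

Lemma avg_grid_scal (K : R) (f : nat -> nat -> R) :
  avg_grid m n (fun i j => K * f i j) = K * avg_grid m n f.
Proof.
  unfold avg_grid.
  rewrite (sum_n_m_ext _ (fun i => K * sum_n_m (fun j => f i j) 1 n)).
  - rewrite (sum_n_m_mult_l (K := R_Ring)); change (mult K) with (Rmult K).
    rewrite <- Rmult_assoc, (Rmult_comm _ K), Rmult_assoc; reflexivity.
  - intros i; apply (sum_n_m_mult_l (K := R_Ring)).
Qed.

Lemma avg_grid_const (K : R) : avg_grid m n (fun _ _ => K) = K.
Proof.
  unfold avg_grid.
  rewrite (sum_n_m_ext _ (fun _ => INR n * K)).
  - rewrite sum_n_m_const; replace (S m - 1)%nat with m by lia.
    assert (0 < INR m) by (apply lt_0_INR; lia).
    assert (0 < INR n) by (apply lt_0_INR; lia).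
    field; lra.
  - intros i; rewrite sum_n_m_const; now replace (S n - 1)%nat with n by lia.
Qed.

Lemma continuity_pt_avg_grid (f : nat -> nat -> R -> R) (x : R) :
  (forall i j, (1 <= i <= m)%nat -> (1 <= j <= n)%nat -> continuity_pt (f i j) x) ->
  continuity_pt (fun y => avg_grid m n (fun i j => f i j y)) x.
Proof.
  intros Hf; unfold avg_grid.
  apply continuity_pt_mult; [apply continuity_pt_const; intros ??; reflexivity|].
  apply (continuity_pt_sum_n_m (fun i y => sum_n_m (fun j => f i j y) 1 n)).
  intros i Hi; apply continuity_pt_sum_n_m; intros j Hj; auto.
Qed.

End GridAverage.

Lemma ln_le_sub_1 (x : R) : 0 < x -> ln x <= x - 1.
Proof. intros Hx; pose proof (exp_ineq1_le (ln x)) as H; rewrite exp_ln in H; lra. Qed.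

Lemma is_derive_nonneg_le (f df : R -> R) (x y : R) :
  x <= y ->
  (forall z, x <= z <= y -> is_derive f z (df z)) ->
  (forall z, x <= z <= y -> 0 <= df z) ->
  f x <= f y.
Proof.
  intros Hxy Hd Hpos.
  destruct (MVT_gen f x y df) as [z [Hz Hf]];
    rewrite ?Rmin_left, ?Rmax_right in * by lra.
  - intros z Hz; apply Hd; lra.
  - intros z Hz; apply derivable_continuous_pt, ex_derive_Reals_0.
    exists (df z); apply Hd; lra.
  - pose proof (Hpos z Hz); nra.
Qed.

Lemma xlnx_one_sub_le (x : R) : 1/2 <= x < 1 -> (1 - x) * ln (1 - x) <= x * ln x.
Proof.
  intros Hx.
  (* G (1/2) = 0, and G' >= 0 on [1/2, 1) because ln y >= 1 - 1/y. *)
  set (G := fun y => y * ln y / (1 - y) - ln (1 - y)).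
  assert (HG : G (1/2) <= G x).
  { apply (is_derive_nonneg_le G (fun y => (ln y + 2 * (1 - y)) / (1 - y) ^ 2)); [lra| |].
    - intros y Hy; unfold G; auto_derive; [lra|]; field; lra.
    - intros y Hy; pose proof (ln_le_sub_1 (/ y) ltac:(apply Rinv_0_lt_compat; lra)) as Hln.
      rewrite ln_Rinv in Hln by lra.
      assert (Hq : 0 <= (2 * y - 1) * (1 - y) / y)
        by (apply Rmult_le_pos; [nra | apply Rlt_le, Rinv_0_lt_compat; lra]).
      replace ((2 * y - 1) * (1 - y) / y) with (1 - / y + 2 * (1 - y)) in Hq by (field; lra).
      apply Rmult_le_pos; [lra | apply Rlt_le, Rinv_0_lt_compat; nra]. }
  assert (HG0 : G (1/2) = 0) by (unfold G; field_simplify (1 - 1/2); field).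
  rewrite HG0 in HG; unfold G in HG.
  assert (H : 0 <= (1 - x) * (x * ln x / (1 - x) - ln (1 - x))) by (apply Rmult_le_pos; lra).
  replace ((1 - x) * (x * ln x / (1 - x) - ln (1 - x)))
    with (x * ln x - (1 - x) * ln (1 - x)) in H by (field; lra).
  lra.
Qed.

Lemma ln_mul_ln_one_sub_antitone (s t : R) :
  1/2 <= s <= t -> t < 1 -> ln t * ln (1 - t) <= ln s * ln (1 - s).
Proof.
  intros Hs Ht.
  enough (H : - (ln s * ln (1 - s)) <= - (ln t * ln (1 - t))) by lra.
  apply (is_derive_nonneg_le (fun y => - (ln y * ln (1 - y)))
           (fun y => ln y / (1 - y) - ln (1 - y) / y)); [lra| |].
  - intros y Hy; auto_derive; [lra|]; replace (1 + - y) with (1 - y) by ring; field; lra.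
  - intros y Hy; pose proof (xlnx_one_sub_le y ltac:(lra)).
    replace (ln y / (1 - y) - ln (1 - y) / y)
      with ((y * ln y - (1 - y) * ln (1 - y)) / (y * (1 - y))) by (field; lra).
    apply Rmult_le_pos; [lra | apply Rlt_le, Rinv_0_lt_compat; nra].
Qed.

Lemma ln_mul_ln_one_sub_le (x y : R) :
  0 < x < y -> y < 1 -> 1 <= x + y -> ln y * ln (1 - y) <= ln x * ln (1 - x).
Proof.
  intros Hxy Hy Hsum.
  destruct (Rle_dec (1/2) x).
  - apply ln_mul_ln_one_sub_antitone; lra.
  - replace (ln x * ln (1 - x)) with (ln (1 - x) * ln (1 - (1 - x)))
      by (replace (1 - (1 - x)) with x by ring; ring).
    apply ln_mul_ln_one_sub_antitone; lra.
Qed.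

Lemma exp_le_compat (x y : R) : x <= y -> exp x <= exp y.
Proof. intros [Hxy|Hxy]; [apply Rlt_le, exp_increasing, Hxy | rewrite Hxy; apply Rle_refl]. Qed.

Lemma Rpower_le_tangent (r t : R) : 0 < r -> 0 <= t <= 1 -> Rpower r t <= 1 + t * (r - 1).
Proof.
  intros Hr Ht.
  set (s := 1 + t * (r - 1)).
  assert (Hs : 0 < s) by (unfold s; nra).
  (* Concavity of ln, t ln r + (1 - t) ln 1 <= ln s, from ln z <= z - 1 at r/s and 1/s. *)
  assert (H1 : ln (r / s) <= r / s - 1) by (apply ln_le_sub_1, Rdiv_lt_0_compat; lra).
  assert (H2 : ln (1 / s) <= 1 / s - 1) by (apply ln_le_sub_1, Rdiv_lt_0_compat; lra).
  rewrite ln_div in H1, H2 by lra; rewrite ln_1 in H2.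
  assert (t * (r / s - 1) + (1 - t) * (1 / s - 1) = 0) by (unfold s in *; field; lra).
  unfold Rpower; rewrite <- (exp_ln s) by lra.
  apply exp_le_compat; nra.
Qed.

Lemma Rpower_concave (l y t : R) : 0 <= l <= 1 -> 0 < y -> 0 <= t <= 1 ->
  (1 - l) + l * Rpower y t <= Rpower (1 - l + l * y) t.
Proof.
  intros Hl Hy Ht.
  set (s := 1 - l + l * y).
  assert (Hs : 0 < s) by (unfold s; nra).
  (* Factor out s^t and bound (1/s)^t, (y/s)^t by the tangent at 1;
     the l-average of the two bounds is 1. *)
  assert (E1 : Rpower y t = Rpower s t * Rpower (y / s) t).
  { rewrite Rpower_mult_distr by (try apply Rdiv_lt_0_compat; lra). f_equal; field; lra. }
  assert (E0 : 1 = Rpower s t * Rpower (1 / s) t).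
  { rewrite Rpower_mult_distr by (try apply Rdiv_lt_0_compat; lra).
    replace (s * (1 / s)) with 1 by (field; lra).
    unfold Rpower; rewrite ln_1, Rmult_0_r, exp_0; reflexivity. }
  pose proof (Rpower_le_tangent (y / s) t ltac:(apply Rdiv_lt_0_compat; lra) Ht) as By.
  pose proof (Rpower_le_tangent (1 / s) t ltac:(apply Rdiv_lt_0_compat; lra) Ht) as B1.
  assert (Hsum : (1 - l) * (1 + t * (1 / s - 1)) + l * (1 + t * (y / s - 1)) = 1)
    by (unfold s in *; field; lra).
  assert (Pst : 0 < Rpower s t) by apply exp_pos.
  rewrite E1; rewrite E0 at 1.
  assert (Hcomb : (1 - l) * Rpower (1 / s) t + l * Rpower (y / s) t <= 1) by nra.
  nra.
Qed.

Lemma ln_mix_mul_ln_le (l v w : R) : 0 <= l <= 1 -> 0 < v <= w -> w < 1 ->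
  ln (1 - l + l * v) * ln w <= ln (1 - l + l * w) * ln v.
Proof.
  intros Hl Hvw Hw.
  assert (Hlv : ln v < 0) by (rewrite <- ln_1; apply ln_increasing; lra).
  assert (Hlw : ln v <= ln w) by (apply ln_le; lra).
  assert (Hlw1 : ln w <= 0) by (rewrite <- ln_1; apply ln_le; lra).
  (* w = v^t with t = ln w / ln v in [0, 1]. *)
  set (t := ln w / ln v).
  assert (Ht : 0 <= t <= 1).
  { unfold t, Rdiv; assert (/ ln v < 0) by (apply Rinv_lt_0_compat; lra).
    assert (ln v * / ln v = 1) by (field; lra). split; nra. }
  assert (Hw_t : Rpower v t = w).
  { unfold Rpower, t; replace (ln w / ln v * ln v) with (ln w) by (field; lra). apply exp_ln; lra. }
  pose proof (Rpower_concave l v t Hl ltac:(lra) Ht) as Hc.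
  rewrite Hw_t in Hc.
  assert (Hmix : ln (1 - l + l * w) <= t * ln (1 - l + l * v)).
  { rewrite <- ln_Rpower; apply ln_le; [nra | exact Hc]. }
  replace (ln w) with (t * ln v) by (unfold t; field; lra).
  nra.
Qed.

Lemma is_lim_seq_even_odd (u : nat -> R) (L : R) :
  is_lim_seq (fun k => u (2 * k)%nat) L -> is_lim_seq (fun k => u (S (2 * k))) L ->
  is_lim_seq u L.
Proof.
  intros He Ho; apply is_lim_seq_spec in He, Ho; apply is_lim_seq_spec.
  intros eps; destruct (He eps) as [N1 H1], (Ho eps) as [N2 H2].
  exists (2 * (N1 + N2))%nat; intros k Hk.
  destruct (Nat.Even_or_Odd k) as [[j ->]|[j ->]].
  - apply H1; lia.
  - replace (2 * j + 1)%nat with (S (2 * j)) by lia; apply H2; lia.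
Qed.

Section AntitoneIteration.

Variables (T : R -> R) (a : R).
Hypotheses
  (T_ge : forall x, a <= x -> a <= T x)
  (T_antitone : forall x y, a <= x -> x <= y -> T y <= T x)
  (T_continuous : forall x, a <= x -> continuity_pt T x)
  (T_no_2cycle : forall x y, a <= x -> a <= y -> T x = y -> T y = x -> x = y).

Variable u : nat -> R.
Hypotheses (u_0 : u 0%nat = a) (u_S : forall l, u (S l) = T (u l)).

Lemma iterate_ge (l : nat) : a <= u l.
Proof. induction l; [rewrite u_0; lra | rewrite u_S; auto]. Qed.

Lemma iterate_le_1 (l : nat) : u l <= u 1%nat.
Proof.
  destruct l as [|l]; rewrite !u_S.
  - rewrite u_0; apply T_ge; lra.
  - apply T_antitone; [lra|]; rewrite u_0; apply iterate_ge.
Qed.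

Lemma iterate_even_incr (k : nat) : u (2 * k)%nat <= u (2 * S k)%nat.
Proof.
  induction k as [|k IHk]; [simpl; rewrite u_0; apply iterate_ge|].
  replace (2 * S (S k))%nat with (S (S (2 * S k))) by lia.
  replace (2 * S k)%nat with (S (S (2 * k))) at 1 by lia.
  rewrite (u_S (S (2 * S k))), (u_S (S (2 * k))).
  apply T_antitone; [apply iterate_ge|].
  rewrite (u_S (2 * S k)), (u_S (2 * k)).
  apply T_antitone; [apply iterate_ge | exact IHk].
Qed.

Lemma iterate_odd_decr (k : nat) : u (S (2 * S k)) <= u (S (2 * k)).
Proof. rewrite !u_S; apply T_antitone; [apply iterate_ge | apply iterate_even_incr]. Qed.

Lemma iterate_cvg_fixpoint : exists L : R, is_lim_seq u (Finite L) /\ a <= L /\ T L = L.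
Proof.
  destruct (ex_finite_lim_seq_incr (fun k => u (2 * k)%nat) (u 1%nat)) as [Le HLe].
  { exact iterate_even_incr. }
  { intros k; apply iterate_le_1. }
  destruct (ex_finite_lim_seq_decr (fun k => u (S (2 * k))) a) as [Lo HLo].
  { exact iterate_odd_decr. }
  { intros k; apply iterate_ge. }
  assert (Le_ge : a <= Le)
    by exact (is_lim_seq_le _ _ a Le (fun k => iterate_ge (2 * k)) (is_lim_seq_const a) HLe).
  assert (Lo_ge : a <= Lo)
    by exact (is_lim_seq_le _ _ a Lo (fun k => iterate_ge (S (2 * k))) (is_lim_seq_const a) HLo).
  assert (T_Le : T Le = Lo).
  { assert (H : is_lim_seq (fun k => u (S (2 * k))) (T Le)).
    { apply (is_lim_seq_ext (fun k => T (u (2 * k)%nat))); [intros k; symmetry; apply u_S|].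
      apply is_lim_seq_continuous; auto. }
    apply Rbar_finite_eq; rewrite <- (is_lim_seq_unique _ _ H); exact (is_lim_seq_unique _ _ HLo). }
  assert (T_Lo : T Lo = Le).
  { assert (H : is_lim_seq (fun k => u (2 * S k)%nat) (T Lo)).
    { apply (is_lim_seq_ext (fun k => T (u (S (2 * k))))).
      { intros k; replace (2 * S k)%nat with (S (S (2 * k))) by lia; symmetry; apply u_S. }
      apply is_lim_seq_continuous; auto. }
    apply is_lim_seq_incr_1 in HLe.
    apply Rbar_finite_eq; rewrite <- (is_lim_seq_unique _ _ H); exact (is_lim_seq_unique _ _ HLe). }
  assert (Le_Lo : Le = Lo) by exact (T_no_2cycle Le Lo Le_ge Lo_ge T_Le T_Lo).
  rewrite <- Le_Lo in HLo, T_Le.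
  exists Le; split; [apply is_lim_seq_even_odd|]; auto.
Qed.

End AntitoneIteration.

Lemma ln_one_sub_div_gap_le (c C P Q : R) : 0 < c <= C -> C < P < Q ->
  ln (1 - c / Q) - ln (1 - c / P) <= ln (1 - C / Q) - ln (1 - C / P).
Proof.
  intros Hc HPQ.
  assert (HiQ : / Q < / P) by (apply Rinv_lt_contravar; nra).
  assert (HiQ0 : 0 < / Q) by (apply Rinv_0_lt_compat; lra).
  assert (HCP : C * / P < 1) by (apply Rlt_div_l; lra).
  unfold Rdiv.
  assert (Hprod : (1 - c * / Q) * (1 - C * / P) <= (1 - C * / Q) * (1 - c * / P)) by nra.
  apply ln_le in Hprod; [|apply Rmult_lt_0_compat; nra].
  rewrite !ln_mult in Hprod by nra.
  lra.
Qed.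

Lemma ln_one_sub_div_cross_le (c C P Q : R) : 0 < c <= C -> C < P < Q ->
  ln (1 - C / Q) * ln (1 - c / P) <= ln (1 - c / Q) * ln (1 - C / P).
Proof.
  intros Hc HPQ.
  assert (HCP : C / P < 1) by (apply Rlt_div_l; lra).
  assert (HcP : c / P <= C / P)
    by (apply Rmult_le_compat_r; [apply Rlt_le, Rinv_0_lt_compat|]; lra).
  assert (HcP0 : 0 < c / P) by (apply Rdiv_lt_0_compat; lra).
  assert (Hl : 0 <= P / Q <= 1) by (split; [apply Rlt_le, Rdiv_lt_0_compat | apply Rle_div_l]; lra).
  pose proof (ln_mix_mul_ln_le (P / Q) (1 - C / P) (1 - c / P) Hl ltac:(lra) ltac:(lra)) as H.
  replace (1 - P / Q + P / Q * (1 - C / P)) with (1 - C / Q) in H by (field; lra).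
  replace (1 - P / Q + P / Q * (1 - c / P)) with (1 - c / Q) in H by (field; lra).
  exact H.
Qed.

Section GridStep.

Variables (m n : nat) (c : nat -> nat -> R) (C a : R).
Hypotheses (m_pos : (0 < m)%nat) (n_pos : (0 < n)%nat)
  (c_pos : forall i j, (1 <= i <= m)%nat -> (1 <= j <= n)%nat -> 0 < c i j)
  (c_le : forall i j, (1 <= i <= m)%nat -> (1 <= j <= n)%nat -> c i j <= C)
  (C_lt_a : C < a).

Definition grid_step (x : R) : R :=
  exp (ln a - avg_grid m n (fun i j => ln (1 - c i j / x))).

Lemma grid_C_pos : 0 < C.
Proof. apply (Rlt_le_trans _ (c 1 1)%nat); [apply c_pos | apply c_le]; lia. Qed.

Lemma one_sub_grid_div_pos (x : R) (i j : nat) : C < x ->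
  (1 <= i <= m)%nat -> (1 <= j <= n)%nat -> 0 < 1 - c i j / x.
Proof.
  intros Hx Hi Hj; pose proof grid_C_pos; pose proof (c_le i j Hi Hj).
  assert (c i j / x < 1) by (apply Rlt_div_l; lra).
  lra.
Qed.

Lemma ln_grid_step (x : R) :
  ln (grid_step x) = ln a - avg_grid m n (fun i j => ln (1 - c i j / x)).
Proof. apply ln_exp. Qed.

Lemma grid_step_ge (x : R) : C < x -> a <= grid_step x.
Proof.
  intros Hx; pose proof grid_C_pos.
  assert (Havg : avg_grid m n (fun i j => ln (1 - c i j / x)) <= 0).
  { rewrite <- (avg_grid_const m n m_pos n_pos 0); apply avg_grid_le; auto.
    intros i j Hi Hj; rewrite <- ln_1; apply ln_le; [now apply one_sub_grid_div_pos|].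
    assert (0 < c i j / x) by (apply Rdiv_lt_0_compat; [apply c_pos | lra]; auto).
    lra. }
  unfold grid_step; rewrite <- (exp_ln a) at 1 by lra.
  apply exp_le_compat; lra.
Qed.

Lemma grid_step_antitone (x y : R) : C < x -> x <= y -> grid_step y <= grid_step x.
Proof.
  intros Hx Hxy; pose proof grid_C_pos.
  unfold grid_step; apply exp_le_compat.
  enough (avg_grid m n (fun i j => ln (1 - c i j / x)) <=
          avg_grid m n (fun i j => ln (1 - c i j / y))) by lra.
  apply avg_grid_le; auto; intros i j Hi Hj.
  apply ln_le; [now apply one_sub_grid_div_pos|].
  assert (c i j / y <= c i j / x); [|lra].
  apply Rmult_le_compat_l; [apply Rlt_le, c_pos; auto | apply Rinv_le_contravar; lra].
Qed.

Lemma grid_step_continuous (x : R) : C < x -> continuity_pt grid_step x.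
Proof.
  intros Hx; pose proof grid_C_pos.
  unfold grid_step.
  apply (continuity_pt_comp (fun y => avg_grid m n (fun i j => ln (1 - c i j / y)))
           (fun s => exp (ln a - s))).
  - apply continuity_pt_avg_grid; intros i j Hi Hj.
    pose proof (one_sub_grid_div_pos x i j Hx Hi Hj).
    apply (derivable_continuous_pt (fun y => ln (1 - c i j / y))), ex_derive_Reals_0.
    auto_derive; repeat split; lra.
  - apply (derivable_continuous_pt (fun s => exp (ln a - s))), ex_derive_Reals_0.
    auto_derive; auto.
Qed.

Lemma grid_step_2cycle_bound (P Q : R) : C < P -> P < Q ->
  grid_step Q = P -> grid_step P = Q -> P * Q <= C * (P + Q).
Proof.
  intros HP HPQ EP EQ; pose proof grid_C_pos.
  pose proof (ln_grid_step Q) as LP; pose proof (ln_grid_step P) as LQ.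
  rewrite EP in LP; rewrite EQ in LQ.
  set (K := ln (1 - C / Q) - ln (1 - C / P)).
  assert (Havg : avg_grid m n (fun i j => ln (1 - c i j / Q)) <=
                 avg_grid m n (fun i j => ln (1 - c i j / P) + K)).
  { apply avg_grid_le; auto; intros i j Hi Hj.
    pose proof (ln_one_sub_div_gap_le (c i j) C P Q
                  (conj (c_pos i j Hi Hj) (c_le i j Hi Hj)) (conj HP HPQ)).
    unfold K; lra. }
  rewrite avg_grid_plus, avg_grid_const in Havg by auto.
  assert (HCP : 0 < 1 - C / P) by (assert (C / P < 1) by (apply Rlt_div_l; lra); lra).
  assert (HCQ : 0 < 1 - C / Q) by (assert (C / Q < 1) by (apply Rlt_div_l; lra); lra).
  assert (Hln : ln (Q * (1 - C / P)) <= ln (P * (1 - C / Q)))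
    by (rewrite !ln_mult by lra; unfold K in Havg; lra).
  apply exp_le_compat in Hln; rewrite !exp_ln in Hln by (apply Rmult_lt_0_compat; lra).
  assert (Hmul : Q * (1 - C / P) * (P * Q) <= P * (1 - C / Q) * (P * Q))
    by (apply Rmult_le_compat_r; nra).
  replace (Q * (1 - C / P) * (P * Q)) with (P * Q * Q - C * Q * Q) in Hmul by (field; lra).
  replace (P * (1 - C / Q) * (P * Q)) with (P * P * Q - C * P * P) in Hmul by (field; lra).
  nra.
Qed.

Lemma grid_step_no_strict_2cycle (P Q : R) : C < P -> P < Q ->
  grid_step Q = P -> grid_step P = Q -> False.
Proof.
  intros HP HPQ EP EQ; pose proof grid_C_pos.
  pose proof (grid_step_2cycle_bound P Q HP HPQ EP EQ) as Hbound.
  pose proof (ln_grid_step Q) as LP; pose proof (ln_grid_step P) as LQ.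
  rewrite EP in LP; rewrite EQ in LQ.
  assert (Hcross : avg_grid m n (fun i j => ln (1 - C / Q) * ln (1 - c i j / P)) <=
                   avg_grid m n (fun i j => ln (1 - C / P) * ln (1 - c i j / Q))).
  { apply avg_grid_le; auto; intros i j Hi Hj; rewrite (Rmult_comm (ln (1 - C / P))).
    exact (ln_one_sub_div_cross_le (c i j) C P Q
             (conj (c_pos i j Hi Hj) (c_le i j Hi Hj)) (conj HP HPQ)). }
  rewrite !avg_grid_scal in Hcross.
  set (x := C / Q) in *; set (y := C / P) in *.
  assert (Hx : 0 < x) by (apply Rdiv_lt_0_compat; lra).
  assert (Hxy : x < y) by (apply Rmult_lt_compat_l; [|apply Rinv_lt_contravar]; nra).
  assert (Hy : y < 1) by (apply Rlt_div_l; lra).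
  assert (Hsum : 1 <= x + y).
  { replace (x + y) with (C * (P + Q) / (P * Q)) by (unfold x, y; field; lra).
    apply Rle_div_r; nra. }
  pose proof (ln_mul_ln_one_sub_le x y (conj Hx Hxy) Hy Hsum).
  set (alpha := ln a - ln C).
  assert (Halpha : 0 < alpha) by (pose proof (ln_increasing C a); unfold alpha; lra).
  assert (Ex : ln a - ln Q = alpha + ln x) by (unfold alpha, x; rewrite ln_div by lra; ring).
  assert (Ey : ln a - ln P = alpha + ln y) by (unfold alpha, y; rewrite ln_div by lra; ring).
  assert (ln (1 - y) < ln (1 - x)) by (apply ln_increasing; lra).
  replace (avg_grid m n (fun i j => ln (1 - c i j / P))) with (alpha + ln x) in Hcross by lra.
  replace (avg_grid m n (fun i j => ln (1 - c i j / Q))) with (alpha + ln y) in Hcross by lra.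
  nra.
Qed.

Lemma grid_step_no_2cycle (x y : R) : C < x -> C < y ->
  grid_step x = y -> grid_step y = x -> x = y.
Proof.
  intros Hx Hy Ex Ey.
  destruct (Rtotal_order x y) as [Hxy|[Hxy|Hxy]]; auto; exfalso.
  - exact (grid_step_no_strict_2cycle x y Hx Hxy Ey Ex).
  - exact (grid_step_no_strict_2cycle y x Hy Hxy Ex Ey).
Qed.

Lemma grid_step_fixpoint_eq (L : R) : C < L -> grid_step L = L ->
  ln a = avg_grid m n (fun i j => ln (L - c i j)).
Proof.
  intros HL EL; pose proof grid_C_pos.
  pose proof (ln_grid_step L) as HlnL; rewrite EL in HlnL.
  rewrite (avg_grid_ext m n _ (fun i j => ln L + ln (1 - c i j / L))).
  - rewrite avg_grid_plus, avg_grid_const by auto; lra.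
  - intros i j Hi Hj; rewrite <- ln_mult by (try apply one_sub_grid_div_pos; auto; lra).
    f_equal; field; lra.
Qed.

End GridStep.

Theorem lemma1 (m n : nat) (rb rw Rth0 : R) :
  (0 < m)%nat -> (0 < n)%nat -> 0 < rb -> 0 < rw -> 0 < Rth0 ->
  INR m * rb + INR n * rw < Rth0 ->
  exists Rarr : R,
    is_lim_seq (stmc_seq m n rb rw Rth0) (Finite Rarr) /\
    INR m * rb + INR n * rw < Rarr /\
    ln Rth0 = avg_grid m n (fun i j => ln (Rarr - INR i * rb - INR j * rw)).
Proof.
  intros Hm Hn Hrb Hrw _ Ha.
  set (c := fun i j : nat => INR i * rb + INR j * rw).
  set (C := INR m * rb + INR n * rw) in *.
  assert (c_pos : forall i j, (1 <= i <= m)%nat -> (1 <= j <= n)%nat -> 0 < c i j).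
  { intros i j Hi Hj; unfold c.
    pose proof (lt_0_INR i ltac:(lia)); pose proof (lt_0_INR j ltac:(lia)); nra. }
  assert (c_le : forall i j, (1 <= i <= m)%nat -> (1 <= j <= n)%nat -> c i j <= C).
  { intros i j Hi Hj; unfold c, C.
    pose proof (le_INR i m ltac:(lia)); pose proof (le_INR j n ltac:(lia)); nra. }
  (* stmc_step m n rb rw Rth0 is grid_step m n c Rth0 by conversion. *)
  destruct (iterate_cvg_fixpoint (grid_step m n c Rth0) Rth0) with (u := stmc_seq m n rb rw Rth0)
    as (L & HL & HaL & Hfix); auto.
  - intros x Hx; apply (grid_step_ge m n c C); auto; lra.
  - intros x y Hx Hxy; apply (grid_step_antitone m n c C); auto; lra.
  - intros x Hx; apply (grid_step_continuous m n c C); auto; lra.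
  - intros x y Hx Hy; apply (grid_step_no_2cycle m n c C); auto; lra.
  - exists L; split; [exact HL | split; [lra|]].
    rewrite (grid_step_fixpoint_eq m n c C Rth0) with (L := L) by (auto; lra).
    apply avg_grid_ext; auto; intros i j _ _; unfold c; f_equal; ring.
Qed.
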